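(* Suppose $a:[0,x_J]\times\mathcal T\to[0,\infty)$ is convex in its first argument and the reals $e^1_{j,n},e^2_{j,n},v_{j,n}$ ($0\le j\le J$, $1\le n\le N$), $d^1_{j,n},d^2_{j,n}$ ($1\le n\le N-1$) are feasible for $\mathbf L_H^{\mathcal X,\mathcal T}$ (with $a$ restricted to $\mathcal X\times\mathcal T$). Then the extended semi-static strategy described in the context super-replicates the American claim along all paths with $X_{t_n}\in[0,x_J]$ for $1\le n\le N$: for every $(y_1,\dots,y_N)\in[0,x_J]^N$ and every exercise time $\rho\in\mathcal T$, its terminal payoff satisfies $\mathcal G_T\ge a(y_{\mathcal N(\rho)},\rho)$, where $\mathcal N(\rho)=\min\{n:t_n\ge\rho\}$.
   Context: Fix $N\ge1$, $J\ge1$, times $0=t_0<t_1<\dots<t_N=T$, $\mathcal T=\{t_1,\dots,t_N\}$, strikes $0=x_0<x_1<\dots<x_J$, $\mathcal X=\{x_0,\dots,x_J\}$ and numbers $p_{j,n}$. $\mathbf L_H^{\mathcal X,\mathcal T}$ is the linear program: over reals $e^1_{j,n},e^2_{j,n},v_{j,n}$ ($1\le n\le N$) and $d^1_{j,n},d^2_{j,n}$ ($1\le n\le N-1$), with $e^1_{j,N}=e^2_{j,1}=0$, minimise $\sum_{j,n}(e^1_{j,n}+e^2_{j,n})p_{j,n}+\sum_jv_{j,N}p_{j,N}$ subject to $v_{j,n}\ge0$ and (i) $v_{j,n}\ge a(x_j,t_n)$; (ii) $e^1_{j,n}+e^2_{k,n+1}+(x_k-x_j)d^1_{j,n}\ge0$;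 (iii) $e^1_{j,n}+e^2_{k,n+1}+(x_k-x_j)d^2_{j,n}-v_{j,n}+v_{k,n+1}\ge0$ for $0\le j,k\le J$, $1\le n\le N-1$. Linear interpolation of $(h_j)_{0\le j\le J}$: $\bar h(x)=\frac{x_{j+1}-x}{x_{j+1}-x_j}h_j+\frac{x-x_j}{x_{j+1}-x_j}h_{j+1}$ for $x_j\le x\le x_{j+1}$. Write $\bar e^1_n,\bar e^2_n,\bar v_n$ for the linear interpolations of $(e^1_{j,n})_j$, $(e^2_{j,n})_j$, $(v_{j,n})_j$. Mixed interpolation: with $u^1_{j,n}=\frac{e^1_{j+1,n}-e^1_{j,n}}{x_{j+1}-x_j}$, $u^2_{j,n}=\frac{(e^1_{j+1,n}-v_{j+1,n})-(e^1_{j,n}-v_{j,n})}{x_{j+1}-x_j}$, set $\tilde d^\delta_n(x_j)=d^\delta_{j,n}$ and for $x\in(x_j,x_{j+1})$: $\tilde d^\delta_n(x)=d^\delta_{j,n}$ if $d^\delta_{j,n}\le u^\delta_{j,n}$; $=d^\delta_{j+1,n}$ if $d^\delta_{j,n}>u^\delta_{j,n}$ and $d^\delta_{j+1,n}\ge u^\delta_{j,n}$; $=u^\delta_{j,n}$ if $d^\delta_{j+1,n}<u^\delta_{j,n}<d^\delta_{j,n}$. The extended strategy holds European claims (portfolios of calls with strikes in $\mathcal X$) paying $\bar e^1_n(X_{t_n})+\bar e^2_n(X_{t_n})$ at $t_n$ for each $n$ and additionally $\bar v_N(X_{t_N})$ at $t_N$, and over $[t_n,t_{n+1}]$ holds $\tilde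 d^1_n(X_{t_n})$ shares if $n<\mathcal N(\rho)$ and $\tilde d^2_n(X_{t_n})$ shares if $n\ge\mathcal N(\rho)$. Its terminal payoff along $(y_1,\dots,y_N)$ with exercise at $\rho$ is $\mathcal G_T=\sum_{n=1}^N(\bar e^1_n(y_n)+\bar e^2_n(y_n))+\bar v_N(y_N)+\sum_{n=1}^{\mathcal N(\rho)-1}(y_{n+1}-y_n)\tilde d^1_n(y_n)+\sum_{n=\mathcal N(\rho)}^{N-1}(y_{n+1}-y_n)\tilde d^2_n(y_n)$. *)

From HB Require Import structures.
From mathcomp Require Import all_boot all_order all_algebra.
From mathcomp Require Import reals.
Set Implicit Arguments. Unset Strict Implicit. Unset Printing Implicit Defensive.
Import Order.TTheory GRing.Theory Num.Theory.
Local Open Scope ring_scope.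

Section Defs.
Variable R : realType.

(* Index of the interpolation segment containing y: the largest j < J with
   x_j <= y.  For strictly increasing x with x_0 = 0 and y in [0, x_J] this
   gives x_j <= y <= x_{j+1}. *)
Definition seg (x : nat -> R) (J : nat) (y : R) : nat :=
  (\max_(j < J | (x j <= y)%R) (j : nat))%N.

Definition lin_interp (x : nat -> R) (J : nat) (h : nat -> R) (y : R) : R :=
  let j := seg x J y in
  ((x j.+1 - y) / (x j.+1 - x j)) * h j + ((y - x j) / (x j.+1 - x j)) * h j.+1.

Definition mixed_interp (x : nat -> R) (J : nat) (d u : nat -> R) (y : R) : R :=
  let j := seg x J y in
  if y == x j then d j
  else if y == x j.+1 then d j.+1
  else if d j <= u j then d j
  else if u j <= d j.+1 then d j.+1
  else u j.

Definition calN (t : nat -> R) (N : nat) (rho : R) : nat :=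
  (1 + find (fun n : nat => (rho <= t n)%R) (iota 1 N))%N.

Definition LP_feasible (N J : nat) (t x : nat -> R) (a : R -> R -> R)
  (e1 e2 v d1 d2 : nat -> nat -> R) : Prop :=
  (forall j, (j <= J)%N -> e1 j N = 0) /\
  (forall j, (j <= J)%N -> e2 j 1%N = 0) /\
  (forall j n, (j <= J)%N -> (1 <= n <= N)%N ->
     0 <= v j n /\ a (x j) (t n) <= v j n) /\
  (forall j k n, (j <= J)%N -> (k <= J)%N -> (1 <= n <= N.-1)%N ->
     0 <= e1 j n + e2 k n.+1 + (x k - x j) * d1 j n /\
     0 <= e1 j n + e2 k n.+1 + (x k - x j) * d2 j n - v j n + v k n.+1).

Definition u1 (x : nat -> R) (e1 : nat -> nat -> R) (n j : nat) : R :=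
  (e1 j.+1 n - e1 j n) / (x j.+1 - x j).
Definition u2 (x : nat -> R) (e1 v : nat -> nat -> R) (n j : nat) : R :=
  ((e1 j.+1 n - v j.+1 n) - (e1 j n - v j n)) / (x j.+1 - x j).

Definition payoff (N J : nat) (t x : nat -> R) (e1 e2 v d1 d2 : nat -> nat -> R)
  (y : nat -> R) (rho : R) : R :=
  let m := calN t N rho in
  \sum_(1 <= n < N.+1)
     (lin_interp x J (fun j => e1 j n) (y n) + lin_interp x J (fun j => e2 j n) (y n))
  + lin_interp x J (fun j => v j N) (y N)
  + \sum_(1 <= n < m)
      (y n.+1 - y n) * mixed_interp x J (fun j => d1 j n) (u1 x e1 n) (y n)
  + \sum_(m <= n < N)
      (y n.+1 - y n) * mixed_interp x J (fun j => d2 j n) (u2 x e1 v n) (y n).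

End Defs.

(* At each rebalancing date the static part e^1_n (y_n) + e^2_{n+1}(y_{n+1}) plus the
   dynamic gain (y_{n+1} - y_n) d~(y_n) is nonnegative: the mixed interpolation d~ is
   chosen so that, for y between two strikes x_j <= y <= x_{j+1}, this quantity at every
   strike x_k dominates a nonnegative LP constraint at x_j or at x_{j+1}, and it is affine
   in y_{n+1} between strikes.  Summing these one-period inequalities telescopes the
   v-terms of constraint (iii) down to v(y_m) at the exercise date t_m, and v(y_m) bounds
   a(y_m, t_m) by convexity of a and constraint (i). *)
From HB Require Import structures.
From mathcomp Require Import all_boot all_order all_algebra.
From mathcomp Require Import reals ring lra.
Set Implicit Arguments. Unset Strict Implicit.
Import Order.TTheory GRing.Theory Num.Theory.
Local Open Scope ring_scope.

Section Grid.
Variables (R : realType) (x : nat -> R) (J : nat).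
Hypotheses (J_gt0 : (0 < J)%N) (x0 : x 0%N = 0)
  (x_incr : forall j, (j < J)%N -> x j < x j.+1).

Lemma grid_le {i k} : (i <= k)%N -> (k <= J)%N -> x i <= x k.
Proof.
elim: k => [|k IH]; first by rewrite leqn0 => /eqP ->.
rewrite leq_eqVlt => /orP[/eqP -> // | ]; rewrite ltnS => ik kJ.
by apply: le_trans (IH ik (ltnW kJ)) _; apply/ltW/x_incr.
Qed.

Lemma grid_in_range {i} : (i <= J)%N -> 0 <= x i <= x J.
Proof. by move=> iJ; rewrite -{1}x0 !grid_le. Qed.

Lemma segP {y} : 0 <= y <= x J ->
  [/\ (seg x J y < J)%N, x (seg x J y) <= y & y <= x (seg x J y).+1].
Proof.
case/andP=> y0 yJ; case: J J_gt0 yJ => // J' _ yJ.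
have P0 : (fun j : 'I_J'.+1 => x j <= y) ord0 by rewrite /= x0.
rewrite /seg (@bigop.bigmax_eq_arg _ ord0 _ _ P0).
case: arg_maxnP => //= i xi_le_y i_max; split => //.
have := ltn_ord i; rewrite ltnS leq_eqVlt => /orP[/eqP -> // | lt_iJ].
rewrite leNgt; apply/negP => /ltW /(i_max (Ordinal (lt_iJ : (i.+1 < J'.+1)%N))).
by rewrite /= ltnn.
Qed.

Definition slope (F : nat -> R) j := (F j.+1 - F j) / (x j.+1 - x j).

Lemma lin_interpD f g y :
  lin_interp x J (fun j => f j + g j) y = lin_interp x J f y + lin_interp x J g y.
Proof. rewrite /lin_interp; ring. Qed.

Lemma lin_interpB f g y :
  lin_interp x J (fun j => f j - g j) y = lin_interp x J f y - lin_interp x J g y.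
Proof. rewrite /lin_interp; ring. Qed.

Lemma lin_interp_eq0 f y : 0 <= y <= x J ->
  (forall j, (j <= J)%N -> f j = 0) -> lin_interp x J f y = 0.
Proof.
move=> /segP[jJ _ _] f0.
by rewrite /lin_interp !f0 ?(ltnW jJ) // !mulr0 addr0.
Qed.

Lemma lin_interpE F y : 0 <= y <= x J ->
  lin_interp x J F y = F (seg x J y) + slope F (seg x J y) * (y - x (seg x J y)).
Proof.
move=> /segP[/x_incr lt_x _ _]; rewrite /lin_interp /slope.
move: lt_x; set j := seg x J y; rewrite -subr_gt0 => /lt0r_neq0.
by move: (x j.+1) (x j) => b c ?; field.
Qed.

Lemma convex_le_lin_interp (c : R -> R) (f : nat -> R) y : 0 <= y <= x J ->
  (forall y z l, 0 <= y <= x J -> 0 <= z <= x J -> 0 <= l <= 1 ->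
     c (l * y + (1 - l) * z) <= l * c y + (1 - l) * c z) ->
  (forall j, (j <= J)%N -> c (x j) <= f j) ->
  c y <= lin_interp x J f y.
Proof.
move=> y_in c_convex c_le_f; have [jJ xj_le_y y_le_xj1] := segP y_in.
rewrite /lin_interp; set j := seg x J y in jJ xj_le_y y_le_xj1 *.
have xj_lt : 0 < x j.+1 - x j by rewrite subr_gt0 x_incr.
set l := (x j.+1 - y) / (x j.+1 - x j).
have -> : (y - x j) / (x j.+1 - x j) = 1 - l.
  by rewrite /l; move: (x j.+1) (x j) (lt0r_neq0 xj_lt) => b d ?; field.
have l_in : 0 <= l <= 1.
  rewrite /l divr_ge0 ?(ltW xj_lt) ?subr_ge0 //=.
  by rewrite ler_pdivrMr // mul1r lerD2l lerN2.
have y_comb : l * x j + (1 - l) * x j.+1 = y.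
  by rewrite /l; move: (x j.+1) (x j) (lt0r_neq0 xj_lt) => b d ?; field.
have := c_convex _ _ _ (grid_in_range (ltnW jJ)) (grid_in_range jJ) l_in.
rewrite y_comb => /le_trans; apply; case/andP: l_in => l0 l1.
by rewrite lerD // ler_wpM2l ?subr_ge0 // c_le_f // ltnW.
Qed.

Section OnePeriod.
Variables (F G d : nat -> R).
Hypothesis F_G_d_ge0 :
  forall j k, (j <= J)%N -> (k <= J)%N -> 0 <= F j + G k + (x k - x j) * d j.

(* For x_j <= y <= x_{j+1} and a strike x_k outside (x_j, x_{j+1}), each branch of the
   mixed interpolation exceeds the constraint at x_j or at x_{j+1} by a product of two
   nonnegative factors. *)
Lemma one_period_ge0_at_strike {y k} : 0 <= y <= x J -> (k <= J)%N ->
  0 <= lin_interp x J F y + G k + (x k - y) * mixed_interp x J d (slope F) y.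
Proof.
move=> y_in kJ; have [jJ xj_le_y y_le_xj1] := segP y_in.
rewrite lin_interpE // /mixed_interp; set j := seg x J y in jJ xj_le_y y_le_xj1 *.
have A0 := F_G_d_ge0 (ltnW jJ) kJ; have A1 := F_G_d_ge0 jJ kJ.
have xj_lt : x j < x j.+1 by exact: x_incr.
set u := slope F j; have Fj1 : F j.+1 = F j + u * (x j.+1 - x j).
  by rewrite /u /slope divfK ?subrKC // subr_eq0 gt_eqF.
rewrite Fj1 in A1; clearbody u.
case: eqP => [-> | _]; first by rewrite subrr mulr0 addr0.
case: eqP => [-> | _]; first exact: A1.
case: (leP (d j) u) => [d_le_u | u_lt_d].
  have : 0 <= (y - x j) * (u - d j) by rewrite mulr_ge0 ?subr_ge0.
  nra.
case: (leP u (d j.+1)) => [u_le_d | d_lt_u].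
  have : 0 <= (x j.+1 - y) * (d j.+1 - u) by rewrite mulr_ge0 ?subr_ge0.
  nra.
have [kj | jk] := leqP k j.
  have : 0 <= (x j - x k) * (d j - u) by rewrite mulr_ge0 ?subr_ge0 ?grid_le ?ltW // ltnW.
  nra.
have : 0 <= (x k - x j.+1) * (u - d j.+1) by rewrite mulr_ge0 ?subr_ge0 ?grid_le ?ltW.
nra.
Qed.

(* The expression is affine in z, so between the strikes x_k <= z <= x_{k+1} it is a
   convex combination of its values at x_k and x_{k+1}. *)
Lemma one_period_ge0 y z : 0 <= y <= x J -> 0 <= z <= x J ->
  0 <= lin_interp x J F y + lin_interp x J G z
       + (z - y) * mixed_interp x J d (slope F) y.
Proof.
move=> y_in z_in; have [kJ xk_le_z z_le_xk1] := segP z_in.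
have Hk := one_period_ge0_at_strike y_in (ltnW kJ).
have Hk1 := one_period_ge0_at_strike y_in kJ.
set L := lin_interp x J F y in Hk Hk1 *.
set D := mixed_interp x J d (slope F) y in Hk Hk1 *.
set k := seg x J z in kJ xk_le_z z_le_xk1 Hk Hk1.
have xk_lt : 0 < x k.+1 - x k by rewrite subr_gt0 x_incr.
have -> : L + lin_interp x J G z + (z - y) * D =
    (x k.+1 - z) / (x k.+1 - x k) * (L + G k + (x k - y) * D) +
    (z - x k) / (x k.+1 - x k) * (L + G k.+1 + (x k.+1 - y) * D).
  rewrite /lin_interp -/k.
  by move: (x k.+1) (x k) (lt0r_neq0 xk_lt) => b c ?; field.
by apply: addr_ge0; apply: mulr_ge0; rewrite ?divr_ge0 ?(ltW xk_lt) ?subr_ge0.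
Qed.

End OnePeriod.
End Grid.

Lemma le_telescoped_payoff (R : realType) (N m : nat) (P Q W A B : nat -> R) :
  (1 <= m <= N)%N -> Q 1%N = 0 -> P N = 0 ->
  (forall n, (1 <= n < N)%N -> 0 <= P n + Q n.+1 + A n) ->
  (forall n, (1 <= n < N)%N -> 0 <= P n + Q n.+1 + B n - W n + W n.+1) ->
  W m <= \sum_(1 <= n < N.+1) (P n + Q n) + W N + \sum_(1 <= n < m) A n
         + \sum_(m <= n < N) B n.
Proof.
move=> /andP[m1 mN] Q1 PN HA HB.
have -> : \sum_(1 <= n < N.+1) (P n + Q n) = \sum_(1 <= n < N) (P n + Q n.+1).
  rewrite !big_split /= big_nat_recr ?(leq_trans m1 mN) //= PN addr0.
  rewrite [\sum_(1 <= i < N.+1) _]big_ltn ?ltnS ?(leq_trans m1 mN) // Q1 add0r.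
  by rewrite [\sum_(2 <= i < N.+1) _]big_add1.
rewrite (@big_cat_nat _ _ _ m) //=.
have before_m : 0 <= \sum_(1 <= n < m) (P n + Q n.+1) + \sum_(1 <= n < m) A n.
  rewrite -big_split /= big_seq_cond; apply: sumr_ge0 => n.
  rewrite mem_index_iota andbT => /andP[n1 nm].
  by rewrite HA // n1 (leq_trans nm mN).
have after_m : W m - W N <= \sum_(m <= n < N) (P n + Q n.+1) + \sum_(m <= n < N) B n.
  rewrite -opprB -telescope_sumr // -sumrN -big_split /=.
  apply: ler_sum_nat => n /andP[mn nN].
  by have := HB n; rewrite (leq_trans m1 mn) nN => /(_ isT); lra.
lra.
Qed.

Lemma calN_grid (R : realType) (t : nat -> R) N m :
  (forall n, (n < N)%N -> t n < t n.+1) -> (1 <= m <= N)%N -> calN t N (t m) = m.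
Proof.
move=> incr /andP[m1 mN].
have t_lt i k : (i < k)%N -> (k <= N)%N -> t i < t k.
  elim: k => // k IH; rewrite ltnS leq_eqVlt => /orP[/eqP -> | ik] kN.
    exact: incr.
  by apply: lt_trans (IH ik (ltnW kN)) _; apply: incr.
have -> : N = (m.-1 + (N - m).+1)%N by rewrite -addSnnS prednK // subnKC.
rewrite /calN iotaD find_cat.
have -> : has (fun n : nat => t m <= t n) (iota 1 m.-1) = false.
  apply/hasPn => n; rewrite mem_iota add1n prednK // => /andP[_ nm].
  by rewrite -ltNge t_lt.
by rewrite size_iota /= !add1n !prednK // lexx addn0 prednK.
Qed.

Theorem mainTheorem8 (R : realType) (N J : nat) (t x : nat -> R)
  (a : R -> R -> R) (e1 e2 v d1 d2 : nat -> nat -> R) :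
  (1 <= N)%N -> (1 <= J)%N ->
  t 0%N = 0 -> (forall n, (n < N)%N -> t n < t n.+1) ->
  x 0%N = 0 -> (forall j, (j < J)%N -> x j < x j.+1) ->
  (* a : [0,x_J] x T -> [0,oo), convex in its first argument *)
  (forall y n, 0 <= y <= x J -> (1 <= n <= N)%N -> 0 <= a y (t n)) ->
  (forall n y z l, (1 <= n <= N)%N -> 0 <= y <= x J -> 0 <= z <= x J ->
     0 <= l <= 1 ->
     a (l * y + (1 - l) * z) (t n) <= l * a y (t n) + (1 - l) * a z (t n)) ->
  LP_feasible N J t x a e1 e2 v d1 d2 ->
  forall (y : nat -> R) (rho : R),
    (forall n, (1 <= n <= N)%N -> 0 <= y n <= x J) ->
    (exists2 m, (1 <= m <= N)%N & rho = t m) ->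
    a (y (calN t N rho)) rho <= payoff N J t x e1 e2 v d1 d2 y rho.
Proof.
move=> N1 J1 _ t_incr x0 x_incr _ a_convex [e1N [e21 [v_ge_a LP_ii_iii]]] y rho y_in.
case=> m m_in ->; rewrite /payoff !calN_grid //.
have y_in' n : (1 <= n < N)%N -> 0 <= y n <= x J /\ 0 <= y n.+1 <= x J.
  by case/andP=> n1 nN; rewrite !y_in ?n1 ?(ltnW nN) ?(leq_trans n1 (ltnW nN)).
have n_le_predN n : (1 <= n < N)%N -> (1 <= n <= N.-1)%N.
  by case/andP=> n1 nN; rewrite n1 -ltnS prednK.
apply: (le_trans (convex_le_lin_interp J1 x0 x_incr (c := fun z => a z (t m))
  (f := fun j => v j m) (y_in m m_in) _ _)).
- by move=> ? ? ?; apply: a_convex.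
- by move=> j jJ; have [] := v_ge_a j m jJ m_in.
apply: (le_telescoped_payoff
  (P := fun n => lin_interp x J (fun j => e1 j n) (y n))
  (Q := fun n => lin_interp x J (fun j => e2 j n) (y n))
  (W := fun n => lin_interp x J (fun j => v j n) (y n))) => //.
- by rewrite lin_interp_eq0 // y_in // leqnn N1.
- by rewrite lin_interp_eq0 // y_in // N1 leqnn.
- move=> n nN; have [yn yn1] := y_in' n nN.
  apply: one_period_ge0 => // j k jJ kJ.
  by case: (LP_ii_iii j k n jJ kJ (n_le_predN n nN)).
- move=> n nN; have [yn yn1] := y_in' n nN.
  have F_G_d_ge0 j k : (j <= J)%N -> (k <= J)%N ->
      0 <= (e1 j n - v j n) + (e2 k n.+1 + v k n.+1) + (x k - x j) * d2 j n.
    by move=> jJ kJ; have [_] := LP_ii_iii j k n jJ kJ (n_le_predN n nN); lra.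
  have := one_period_ge0 J1 x0 x_incr F_G_d_ge0 yn yn1.
  have -> : slope x (fun j => e1 j n - v j n) = u2 x e1 v n by [].
  rewrite lin_interpB lin_interpD; lra.
Qed.
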